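(* The forgetful functor $U\colon \mathbf{Lens}\to\mathbf{Cat}$ preserves and reflects epimorphisms: a lens $E$ is an epimorphism in $\mathbf{Lens}$ if and only if its get functor $UE$ is an epimorphism in $\mathbf{Cat}$.
   Context: $\mathbf{Cat}$ is the category of small categories and functors. A lens $F\colon \mathbf{A}\to\mathbf{B}$ between small categories consists of a functor $F\colon\mathbf{A}\to\mathbf{B}$ (the get functor) together with, for each object $A$ of $\mathbf{A}$, a function $\varphi_{F,A}$ from the set of morphisms of $\mathbf{B}$ with domain $FA$ to the set of morphisms of $\mathbf{A}$ with domain $A$, such that: $F(\varphi_{F,A}b)=b$; $\varphi_{F,A}(\mathrm{id}_{FA})=\mathrm{id}_A$; and $\varphi_{F,A}(b'\circ b)=\varphi_{F,A'}(b')\circ\varphi_{F,A}(b)$ whenever $b$ has domain $FA$, $A'$ is the codomain of $\varphi_{F,A}b$, and $b'$ has domain $FA'$. $\mathbf{Lens}$ is the category of small categories and lenses; the composite of $F\colon\mathbf{A}\to\mathbf{B}$ and $G\colon\mathbf{B}\to\mathbf{C}$ has get functor $G\circ F$ and put functions $\varphi_{G\circ F,A}(c)=\varphi_{F,A}(\varphi_{G,FA}(c))$. $U\colon\mathbf{Lens}\to\mathbf{Cat}$ is the identity-on-objects functor sending a lens to its get functor. *)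

From Stdlib Require Import Eqdep Setoid.
Set Implicit Arguments.

Record Category := {
  Ob :> Type;
  Hom : Ob -> Ob -> Type;
  idm : forall a, Hom a a;
  comp : forall a b c, Hom b c -> Hom a b -> Hom a c;
  comp_id_l : forall a b (f : Hom a b), comp (idm b) f = f;
  comp_id_r : forall a b (f : Hom a b), comp f (idm a) = f;
  comp_assoc : forall a b c d (f : Hom a b) (g : Hom b c) (h : Hom c d),
      comp h (comp g f) = comp (comp h g) f
}.
Arguments Hom {C} a b : rename.
Arguments idm {C} a : rename.
Arguments comp {C a b c} g f : rename.

Definition Arr (C : Category) := { xy : Ob C * Ob C & Hom (fst xy) (snd xy) }.
Definition arr {C : Category} {x y : C} (f : Hom x y) : Arr C :=
  existT (fun xy : Ob C * Ob C => Hom (fst xy) (snd xy)) (x, y) f.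

Definition Out {C : Category} (x : C) := { y : Ob C & Hom x y }.

Record Functor (C D : Category) := {
  fobj :> Ob C -> Ob D;
  fmap : forall a b, Hom a b -> Hom (fobj a) (fobj b);
  fmap_id : forall a, fmap a a (idm a) = idm (fobj a);
  fmap_comp : forall a b c (f : Hom a b) (g : Hom b c),
      fmap a c (comp g f) = comp (fmap b c g) (fmap a b f)
}.
Arguments fmap {C D} F {a b} f : rename.

Definition Functor_comp_obj {C D E : Category} (G : Functor D E) (F : Functor C D) :
  Functor C E.
Proof.
  refine {| fobj := fun a => G (F a);
            fmap := fun a b f => fmap G (fmap F f) |}.
  - intro a. rewrite !fmap_id. reflexivity.
  - intros. rewrite !fmap_comp. reflexivity.
Defined.

(** Equality of functors (as morphisms of Cat): they agree on every morphism,
    domains and codomains included. *)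
Definition functor_eq {C D : Category} (F G : Functor C D) : Prop :=
  forall (x y : C) (f : Hom x y), arr (fmap F f) = arr (fmap G f).

Definition cat_epi {A B : Category} (E : Functor A B) : Prop :=
  forall (C : Category) (G H : Functor B C),
    functor_eq (Functor_comp_obj G E) (Functor_comp_obj H E) -> functor_eq G H.

(** Lenses. [put a] is the function phi_{F,a} from morphisms of B with domain
    F a to morphisms of A with domain a. *)
Record Lens (A B : Category) := {
  get :> Functor A B;
  put : forall a : A, @Out B (get a) -> @Out A a;
  put_lift : forall (a : A) (u : @Out B (get a)),
      existT (fun y => Hom (get a) y) (get (projT1 (put a u))) (fmap get (projT2 (put a u))) = u;
  put_id : forall a : A, put a (existT _ (get a) (idm (get a))) = existT _ a (idm a);
  put_comp : forall (a a1 : A) (f : Hom (get a) (get a1)) (g : Hom a a1),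
      put a (existT _ (get a1) f) = existT _ a1 g ->
      forall v : @Out B (get a1),
        put a (existT _ (projT1 v) (comp (projT2 v) f))
        = existT _ (projT1 (put a1 v)) (comp (projT2 (put a1 v)) g)
}.
Arguments put {A B} L a u : rename.


Lemma lens_comp_put_lift {A B C : Category} (G : Lens B C) (F : Lens A B)
  (a : A) (u : @Out C (G (F a))) :
  existT (fun y => Hom (G (F a)) y)
    (G (F (projT1 (put F a (put G (F a) u)))))
    (fmap G (fmap F (projT2 (put F a (put G (F a) u))))) = u.
Proof.
  etransitivity; [| exact (put_lift G (F a) u)].
  exact (f_equal (fun w : @Out B (F a) =>
            existT (fun y => Hom (G (F a)) y) (G (projT1 w)) (fmap G (projT2 w)))
           (put_lift F a (put G (F a) u))).
Qed.

Definition lens_comp {A B C : Category} (G : Lens B C) (F : Lens A B) : Lens A C.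
Proof.
  refine {| get := Functor_comp_obj G F;
            put := fun a u => put F a (put G (F a) u) |}.
  - intros a u. apply lens_comp_put_lift.
  - intro a. simpl. rewrite (put_id G). apply (put_id F).
  - intros a a1 f g H v. simpl in *.
    pose proof (put_lift F a (put G (F a) (existT _ (G (F a1)) f))) as HL.
    rewrite H in HL. simpl in HL.
    assert (HG : put G (F a) (existT _ (G (F a1)) f)
                 = existT _ (F a1) (fmap F g)) by (symmetry; exact HL).
    rewrite HG in H.
    pose proof (@put_comp _ _ G (F a) (F a1) f (fmap F g) HG v) as HG2.
    rewrite HG2.
    apply (@put_comp _ _ F a a1 (fmap F g) g H).
Defined.

Definition lens_eq {A B : Category} (K L : Lens A B) : Prop :=
  functor_eq K L /\
  forall (a : A) (u : @Out B (K a)) (v : @Out B (L a)),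
    arr (projT2 u) = arr (projT2 v) -> put K a u = put L a v.

Definition lens_epi {A B : Category} (E : Lens A B) : Prop :=
  forall (C : Category) (K L : Lens B C),
    lens_eq (lens_comp K E) (lens_comp L E) -> lens_eq K L.

(** Both kinds of epimorphism are exactly the lenses surjective on objects.
    Every morphism of [B] out of an object [E a] is the image of its lift
    [put E a], so such a lens is surjective on morphisms and hence an
    epimorphism in Cat; its put functions are recovered from those of a
    composite [K ∘ E] because [put E a] has the left inverse [E].
    Conversely, the image [S] of a lens is closed under outgoing morphisms.
    On [B] take the copresheaf with fibre [bool] in which a morphism [b -> c]
    keeps a flag unless it enters [S] ([b ∉ S], [c ∈ S]), where it resets it.
    Its natural sections "false" and "outside [S]" agree on [S], and sections
    of a copresheaf are lenses into its category of elements; so the two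
    lenses coincide after composing with [E], while they differ, already as
    functors, as soon as [S] misses an object. *)

From Stdlib Require Import Eqdep ProofIrrelevance ClassicalEpsilon.

Definition in_image {A B : Category} (F : Functor A B) (b : B) : Prop :=
  exists a, F a = b.

Definition obj_surjective {A B : Category} (F : Functor A B) : Prop :=
  forall b : B, in_image F b.

Definition arr_map {C D : Category} (F : Functor C D) (f : Arr C) : Arr D :=
  arr (fmap F (projT2 f)).

Lemma out_eq_of_arr_eq {C : Category} {x y y' : C} {f : Hom x y} {g : Hom x y'} :
  arr f = arr g -> existT (fun z => Hom x z) y f = existT _ y' g.
Proof.
  intro H.
  assert (y = y') by exact (f_equal (fun p => snd (projT1 p)) H). subst y'.
  apply inj_pair2 in H. now subst.
Qed.

Lemma lens_lift_arr {A B : Category} (E : Lens A B) (a : A) {y : B} (f : Hom (E a) y) :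
  arr f = arr (fmap E (projT2 (put E a (existT _ y f)))).
Proof.
  symmetry.
  exact (f_equal (fun u : Out (E a) => arr (projT2 u)) (put_lift E a (existT _ y f))).
Qed.

Lemma in_image_forward {A B : Category} (E : Lens A B) {b c : B} :
  Hom b c -> in_image E b -> in_image E c.
Proof.
  intros f [a <-].
  exists (projT1 (put E a (existT _ c f))).
  exact (f_equal (@projT1 _ _) (put_lift E a (existT _ c f))).
Qed.

Lemma put_inj {A B : Category} (E : Lens A B) (a : A) (u v : Out (E a)) :
  put E a u = put E a v -> u = v.
Proof. intro H. now rewrite <- (put_lift E a u), <- (put_lift E a v), H. Qed.

Lemma obj_surjective_cat_epi {A B : Category} (E : Lens A B) :
  obj_surjective E -> cat_epi E.
Proof.
  intros HE C G H HGH x y f.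
  destruct (HE x) as [a <-].
  change (arr_map G (arr f) = arr_map H (arr f)).
  rewrite (lens_lift_arr E a f).
  exact (HGH _ _ _).
Qed.

Lemma obj_surjective_lens_epi {A B : Category} (E : Lens A B) :
  obj_surjective E -> lens_epi E.
Proof.
  intros HE C K L [HKL_get HKL_put]. split.
  - exact (obj_surjective_cat_epi E HE _ _ _ HKL_get).
  - intros b u v Huv.
    destruct (HE b) as [a <-].
    exact (put_inj E a _ _ (HKL_put a u v Huv)).
Qed.

Section Elements.
Variables (B : Category) (X : Type) (act : forall b c : B, Hom b c -> X -> X).
Arguments act {b c}.
Hypothesis act_id : forall (b : B) (x : X), act (idm b) x = x.
Hypothesis act_comp : forall (b c d : B) (f : Hom b c) (g : Hom c d) (x : X),
  act (comp g f) x = act g (act f x).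

Definition elements_hom (p q : B * X) : Type :=
  { f : Hom (fst p) (fst q) | act f (snd p) = snd q }.

Lemma elements_hom_eq (p q : B * X) (f g : elements_hom p q) :
  proj1_sig f = proj1_sig g -> f = g.
Proof. apply eq_sig_hprop. intros; apply proof_irrelevance. Qed.

Definition elements_comp (p q r : B * X) (g : elements_hom q r) (f : elements_hom p q) :
  elements_hom p r :=
  exist _ (comp (proj1_sig g) (proj1_sig f))
    (eq_trans (act_comp _ _ _ (proj1_sig f) (proj1_sig g) (snd p))
       (eq_trans (f_equal (act (proj1_sig g)) (proj2_sig f)) (proj2_sig g))).

Definition elements : Category.
Proof.
  refine {| Ob := (B * X)%type;
            Hom := elements_hom;
            idm := fun p => exist _ (idm (fst p)) (act_id (fst p) (snd p));
            comp := elements_comp |};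
    intros; apply elements_hom_eq; simpl.
  - apply comp_id_l.
  - apply comp_id_r.
  - apply comp_assoc.
Defined.

Definition elements_proj : Functor elements B.
Proof.
  refine {| fobj := fst : elements -> B;
            fmap := fun p q f => proj1_sig f |}; reflexivity.
Defined.

Section NaturalSection.
Variables (s : B -> X) (s_natural : forall (b c : B) (f : Hom b c), act f (s b) = s c).
Arguments s_natural {b c}.

Definition section_functor : Functor B elements.
Proof.
  refine {| fobj := fun b => (b, s b) : elements;
            fmap := fun b c f => exist _ f (s_natural f) : @Hom elements (b, s b) (c, s c) |};
    intros; apply elements_hom_eq; reflexivity.
Defined.

Definition section_lens : Lens B elements.
Proof.
  refine {| get := section_functor;
            put := fun b u => existT _ (elements_proj (projT1 u))
                                      (fmap elements_proj (projT2 u)) |}.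
  - intros b [[c y] [f Hf]]. simpl in *. subst y.
    generalize (s_natural f). generalize (s c). now intros y <-.
  - reflexivity.
  - intros b b1 f g Hfg v. apply inj_pair2 in Hfg. simpl in *. now rewrite Hfg.
Defined.

End NaturalSection.

Lemma section_functor_arr_eq (s t : B -> X) s_nat t_nat (b c : B) (f : Hom b c) :
  s b = t b -> s c = t c ->
  arr (fmap (section_functor s s_nat) f) = arr (fmap (section_functor t t_nat) f).
Proof.
  intros Hb Hc. simpl. generalize (s_nat b c f) (t_nat b c f).
  rewrite Hb, Hc. intros p q. now rewrite (proof_irrelevance _ p q).
Qed.

Lemma section_lens_put_eq (s t : B -> X) s_nat t_nat (b : B)
  (u : Out (section_lens s s_nat b)) (v : Out (section_lens t t_nat b)) :
  arr (projT2 u) = arr (projT2 v) ->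
  put (section_lens s s_nat) b u = put (section_lens t t_nat) b v.
Proof. intro H. exact (out_eq_of_arr_eq (f_equal (arr_map elements_proj) H)). Qed.

End Elements.

Arguments elements {B X act} act_id act_comp.

Section ResetFlag.
Variables (B : Category) (S : B -> bool).
Hypothesis S_forward : forall b c : B, Hom b c -> S b = true -> S c = true.
Arguments S_forward {b c}.

Definition reset_flag {b c : B} (_ : Hom b c) (i : bool) : bool :=
  i && (S b || negb (S c)).

Lemma reset_flag_id (b : B) (i : bool) : reset_flag (idm b) i = i.
Proof. unfold reset_flag. now destruct i, (S b). Qed.

Lemma reset_flag_comp (b c d : B) (f : Hom b c) (g : Hom c d) (i : bool) :
  reset_flag (comp g f) i = reset_flag g (reset_flag f i).
Proof.
  unfold reset_flag.
  pose proof (S_forward f). pose proof (S_forward g).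
  destruct i, (S b), (S c), (S d); intuition congruence.
Qed.

Definition flags : Category := elements reset_flag_id reset_flag_comp.

Lemma false_natural (b c : B) (f : Hom b c) : reset_flag f false = false.
Proof. reflexivity. Qed.

Lemma outside_natural (b c : B) (f : Hom b c) :
  reset_flag f (negb (S b)) = negb (S c).
Proof.
  unfold reset_flag. pose proof (S_forward f).
  destruct (S b), (S c); intuition congruence.
Qed.

Definition flag_false : Lens B flags := section_lens _ _ _ _ _ _ false_natural.
Definition flag_outside : Lens B flags := section_lens _ _ _ _ _ _ outside_natural.

Lemma flag_lenses_comp_eq {A : Category} (E : Lens A B) :
  (forall a : A, S (E a) = true) ->
  lens_eq (lens_comp flag_false E) (lens_comp flag_outside E).
Proof.
  intro HS. split.
  - intros x y f. apply section_functor_arr_eq; simpl; now rewrite HS.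
  - intros a u v Huv. apply (f_equal (put E a)). now apply section_lens_put_eq.
Qed.

Lemma flag_lenses_functor_eq_S : functor_eq flag_false flag_outside -> forall b, S b = true.
Proof.
  intros H b.
  pose proof (f_equal (fun w : Arr flags => snd (fst (projT1 w))) (H b b (idm b))) as Hb.
  simpl in Hb. now destruct (S b).
Qed.

End ResetFlag.

Section ImageTest.
Variables (A B : Category) (E : Lens A B).

Definition in_imageb (b : B) : bool :=
  if excluded_middle_informative (in_image E b) then true else false.

Lemma in_imagebP (b : B) : in_imageb b = true <-> in_image E b.
Proof.
  unfold in_imageb. destruct excluded_middle_informative; intuition discriminate.
Qed.

Lemma in_imageb_forward (b c : B) : Hom b c -> in_imageb b = true -> in_imageb c = true.
Proof. intros f. rewrite !in_imagebP. exact (in_image_forward E f). Qed.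

Lemma in_imageb_get (a : A) : in_imageb (E a) = true.
Proof. apply in_imagebP. now exists a. Qed.

Lemma flag_lenses_image_comp_eq :
  lens_eq (lens_comp (flag_false _ _ in_imageb_forward) E)
          (lens_comp (flag_outside _ _ in_imageb_forward) E).
Proof. exact (flag_lenses_comp_eq _ _ in_imageb_forward E in_imageb_get). Qed.

Lemma lens_epi_obj_surjective : lens_epi E -> obj_surjective E.
Proof.
  intros HE b. apply in_imagebP, (flag_lenses_functor_eq_S _ _ in_imageb_forward).
  exact (proj1 (HE _ _ _ flag_lenses_image_comp_eq)).
Qed.

Lemma cat_epi_obj_surjective : cat_epi E -> obj_surjective E.
Proof.
  intros HE b. apply in_imagebP, (flag_lenses_functor_eq_S _ _ in_imageb_forward).
  exact (HE _ _ _ (proj1 flag_lenses_image_comp_eq)).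
Qed.

End ImageTest.

Theorem theorem3p6 (A B : Category) (E : Lens A B) :
  lens_epi E <-> cat_epi (get E).
Proof.
  split.
  - intro HE. apply obj_surjective_cat_epi, lens_epi_obj_surjective, HE.
  - intro HE. apply obj_surjective_lens_epi, cat_epi_obj_surjective, HE.
Qed.
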